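(* Let $g,n\ge1$ be integers and $\mathcal{A},\mathcal{B}\in\mathcal{D}_{g,n}$ weight data. (1) If $\mathcal{A}\le\mathcal{B}$, then $G^{(g,\mathcal{A})}\subset G^{(g,\mathcal{B})}$. (2) If $\mathcal{A}$ and $\mathcal{B}$ are in the same chamber, then $G^{(g,\mathcal{A})}=G^{(g,\mathcal{B})}$. (3) If $\mathcal{A}$ and $\mathcal{B}$ are obtained one from the other through a permutation of coordinates, then $G^{(g,\mathcal{A})}$ is isomorphic to $G^{(g,\mathcal{B})}$. (4) If $\mathcal{A}$ and $\mathcal{B}$ are in chambers $Ch_1$ and $Ch_2$ with $[Ch_1]=[Ch_2]$ (i.e. in the same $S_n$-orbit), then $G^{(g,\mathcal{A})}$ is isomorphic to $G^{(g,\mathcal{B})}$.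
   Context: A weight datum is $\mathcal{A}=(a_1,\dots,a_n)$ with $a_i\in\mathbb{Q}\cap(0,1]$ and $2g-2+\sum_i a_i>0$; $\mathcal{D}_{g,n}\subset\mathbb{R}^n$ is the set of weight data; $\mathcal{A}\le\mathcal{B}$ means $a_i\le b_i$ for all $i$. For $S\subseteq\{1,\dots,n\}$ with $2\le|S|\le n$, the wall $w_S$ is the locus $\sum_{i\in S}a_i=1$; chambers are the connected components of the complement in $\mathcal{D}_{g,n}$ of all walls. $S_n$ acts by permuting coordinates, and $[Ch]$ denotes the $S_n$-orbit of a chamber. A $(g,\mathcal{A})$-stable graph is a finite connected graph $G$ (loops and multiple edges allowed) with vertex weight $w:V(G)\to\mathbb{Z}_{\ge0}$ and $n$ legs labelled $1,\dots,n$ attached via $m:\{1,\dots,n\}\to V(G)$, with $b_1(G)+\sum_v w(v)=g$ and $2w(v)-2+|v|_E+|v|_{\mathcal{A}}>0$ for every vertex $v$, where $|v|_E$ is the number of edge half-edges at $v$ (loops counted twice) and $|v|_{\mathcal{A}}=\sum_{m(i)=v}a_i$. The graph complex $G^{(g,\mathcal{A})}$ is the chain complex of rational vector spaces generated by pairs $[\mathbf{G},\omega]$, where $\mathbf{G}$ is a $(g,\mathcal{A})$-stable graph and $\omega$ a total order of its edges, subject to $[\mathbf{G},\omega]=\mathrm{sgn}(\sigma)[\mathbf{G}',\omega']$ whenever there is an isomorphism of $n$-marked weighted graphs $\mathbf{G}\cong\mathbf{G}'$ under which $\omega,\omega'$ differ by $\sigma\in S_{|E(\mathbf{G})|}$;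 it is graded by the number of edges, with differential the signed sum of the contractions of the non-loop edges. *)

From HB Require Import structures.
From mathcomp Require Import all_boot all_order all_algebra all_fingroup.
From mathcomp Require Import all_classical all_reals topology normedtype.
From mathcomp Require Import Rstruct Rstruct_topology.

Set Implicit Arguments.
Unset Strict Implicit.
Unset Printing Implicit Defensive.

Import Order.TTheory GRing.Theory Num.Theory.

Local Open Scope ring_scope.

Definition weight_datum (g n : nat) (A : 'I_n -> rat) : Prop :=
  (forall i, 0 < A i <= 1) /\ 0 < (2 * g)%:R - 2 + \sum_(i < n) A i.

Definition wle (n : nat) (A B : 'I_n -> rat) : Prop := forall i, A i <= B i.

Definition realR := Rdefinitions.R.

Definition Dreg (g n : nat) : set 'rV[realR]_n :=
  [set x : 'rV[realR]_n | (forall i, 0 < x ord0 i <= 1) /\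
           0 < (2 * g)%:R - 2 + \sum_(i < n) x ord0 i].

Definition walls (n : nat) : set 'rV[realR]_n :=
  [set x : 'rV[realR]_n | exists S : {set 'I_n}, (2 <= #|S|)%N /\ \sum_(i in S) x ord0 i = 1].

Definition chamber_region (g n : nat) : set 'rV[realR]_n :=
  [set x : 'rV[realR]_n | @Dreg g n x /\ ~ @walls n x].

Definition wpt (n : nat) (A : 'I_n -> rat) : 'rV[realR]_n :=
  \row_i (ratr (A i) : realR).

Definition chamber_of (g n : nat) (A : 'I_n -> rat) : set 'rV[realR]_n :=
  connected_component (@chamber_region g n) (wpt A).

Definition perm_pt (n : nat) (s : 'S_n) (x : 'rV[realR]_n) : 'rV[realR]_n :=
  \row_i x ord0 (s i).

Definition perm_set (n : nat) (s : 'S_n) (C : set 'rV[realR]_n)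
  : set 'rV[realR]_n := (perm_pt s @` C)%classic.

(* A raw graph (nv, wt, ends, legs):
   - vertices are 0, ..., nv-1;
   - wt = the list of vertex weights w(v);
   - ends = the list of edges, each given by its two end vertices; the
     position of an edge in this list is its position in the total order
     omega of the edges (the orientation of a pair is irrelevant, see
     [giso] below: edges are unoriented);
   - legs = the list m(1), ..., m(n) of vertices carrying the legs. *)
Definition rgraph : Type := (nat * seq nat * seq (nat * nat) * seq nat)%type.

Definition nv (G : rgraph) : nat := G.1.1.1.
Definition wt (G : rgraph) : seq nat := G.1.1.2.
Definition ends (G : rgraph) : seq (nat * nat) := G.1.2.
Definition legs (G : rgraph) : seq nat := G.2.

Definition wv (G : rgraph) (v : nat) : nat := nth 0%N (wt G) v.
Definition edge (G : rgraph) (j : nat) : nat * nat := nth (0, 0)%N (ends G) j.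
Definition leg (G : rgraph) (i : nat) : nat := nth 0%N (legs G) i.

Definition adj (G : rgraph) : rel 'I_(nv G) :=
  fun u v => has (fun e : nat * nat =>
    ((e.1 == u) && (e.2 == v)) || ((e.1 == v) && (e.2 == u))) (ends G).

Definition valE (G : rgraph) (v : nat) : nat :=
  (count (fun e : nat * nat => e.1 == v) (ends G)
   + count (fun e : nat * nat => e.2 == v) (ends G))%N.

Definition valA (n : nat) (A : 'I_n -> rat) (G : rgraph) (v : nat) : rat :=
  \sum_(i < n | leg G i == v) A i.

Definition wf_graph (n : nat) (G : rgraph) : Prop :=
  [/\ (0 < nv G)%N, size (wt G) = nv G,
      all (fun e : nat * nat => (e.1 < nv G) && (e.2 < nv G))%N (ends G),
      size (legs G) = n /\ all (fun v => v < nv G)%N (legs G) &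
      forall u v : 'I_(nv G), connect (@adj G) u v].

Definition betti1 (G : rgraph) : nat := (size (ends G) + 1 - nv G)%N.

Definition stable (g n : nat) (A : 'I_n -> rat) (G : rgraph) : Prop :=
  [/\ wf_graph n G,
      (betti1 G + sumn (wt G))%N = g &
      forall v, (v < nv G)%N ->
        0 < (2 * wv G v)%:R - 2 + (valE G v)%:R + valA A G v].

Definition gen (g n : nat) (A : 'I_n -> rat) (k : nat) (G : rgraph) : Prop :=
  stable g A G /\ size (ends G) = k.

(* action of a permutation of 'I_m on natural numbers (identity beyond m) *)
Definition pact (m : nat) (s : 'S_m) (v : nat) : nat :=
  if @insub nat (fun x => (x < m)%N) 'I_m v is Some i then val (s i) else v.

(* Isomorphism of n-marked weighted graphs G ~= G' (vertex bijection sv,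
   edge bijection se) under which the edge orders of G and G' differ by the
   permutation se; eps = sgn(se). *)
Definition giso (n : nat) (G G' : rgraph) (eps : rat) : Prop :=
  exists (hv : nv G' = nv G) (he : size (ends G') = size (ends G))
         (sv : 'S_(nv G)) (se : 'S_(size (ends G))),
  [/\ forall v, (v < nv G)%N -> wv G' (pact sv v) = wv G v,
      forall i, (i < n)%N -> leg G' i = pact sv (leg G i),
      forall j, (j < size (ends G))%N ->
        let e := edge G j in
        let e' := edge G' (pact se j) in
        (e' == (pact sv e.1, pact sv e.2)) || (e' == (pact sv e.2, pact sv e.1))
    & eps = (-1) ^+ odd_perm se].

(* Formal Q-linear combinations of graphs (the free vector space)           *)

Definition fsum : Type := seq (rat * rgraph).

Definition coef (x : fsum) (G : rgraph) : rat :=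
  \sum_(p <- x) (if p.2 == G then p.1 else 0).

Definition fscale (c : rat) (x : fsum) : fsum := [seq (c * p.1, p.2) | p <- x].
Definition fsub (x y : fsum) : fsum := x ++ fscale (-1) y.
Definition fgen (G : rgraph) : fsum := [:: (1, G)].

Definition flift (f : rgraph -> fsum) (x : fsum) : fsum :=
  flatten [seq fscale p.1 (f p.2) | p <- x].

(* x is (a representative of) an element of degree k of G^(g,A) *)
Definition inC (g n : nat) (A : 'I_n -> rat) (k : nat) (x : fsum) : Prop :=
  forall G, coef x G != 0 -> gen g A k G.

(* the defining relations [G,w] - sgn(s) [G',w'] of G^(g,A) *)
Definition isorel (g n : nat) (A : 'I_n -> rat) (G G' : rgraph) (eps : rat)
  : Prop := [/\ stable g A G, stable g A G' & giso n G G' eps].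

Definition relv (G G' : rgraph) (eps : rat) : fsum := [:: (1, G); (- eps, G')].

(* x lies in the span of the defining relations of G^(g,A), i.e. x = 0 in
   the quotient G^(g,A) *)
Definition inR (g n : nat) (A : 'I_n -> rat) (x : fsum) : Prop :=
  exists rs : seq (rat * rgraph * rgraph * rat),
    (forall r, r \in rs -> isorel g A r.1.1.2 r.1.2 r.2) /\
    forall G, coef x G =
      coef (flatten [seq fscale r.1.1.1 (relv r.1.1.2 r.1.2 r.2) | r <- rs]) G.

(* contraction of the j-th edge (a,b), a <> b: b is merged into a, vertices
   above b are shifted down, the weight of the new vertex is w(a)+w(b), and
   the remaining edges keep their relative order. *)
Definition contract (G : rgraph) (j : nat) : rgraph :=
  let: (a, b) := edge G j in
  let rl v := unbump b (if v == b then a else v) in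
  ((nv G).-1,
  [seq (wv G (bump b u) + (if bump b u == a then wv G b else 0%N))%N
     | u <- iota 0 (nv G).-1],
  [seq (rl e.1, rl e.2) | e <- take j (ends G) ++ drop j.+1 (ends G)],
  [seq rl v | v <- legs G]).

Definition dgen (G : rgraph) : fsum :=
  [seq ((-1) ^+ j, contract G j)
     | j <- iota 0 (size (ends G)) & (edge G j).1 != (edge G j).2].

Definition dif (x : fsum) : fsum := flift dgen x.

(* G^(g,A) is a subcomplex of G^(g,B): every generator of G^(g,A) is a
   generator of G^(g,B), the induced map G^(g,A) -> G^(g,B) is well defined
   and injective, and its image is closed under the differential. *)
Definition subcomplex (g n : nat) (A B : 'I_n -> rat) : Prop :=
  [/\ forall k x, inC g A k x -> inC g B k x,
      forall k x, inC g A k x -> (inR g A x <-> inR g B x) &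
      forall k x, inC g A k x -> inC g A k.-1 (dif x)].

(* G^(g,A) = G^(g,B): same spaces, same relations (the differential is given
   by the same formula) *)
Definition same_complex (g n : nat) (A B : 'I_n -> rat) : Prop :=
  (forall k x, inC g A k x <-> inC g B k x) /\
  (forall x, inR g A x <-> inR g B x).

Definition chain_map (g n : nat) (A B : 'I_n -> rat) (f : rgraph -> fsum)
  : Prop :=
  [/\ forall k G, gen g A k G -> inC g B k (f G),
      forall k x, inC g A k x -> inR g A x -> inR g B (flift f x) &
      forall k G, gen g A k G -> inR g B (fsub (flift f (dgen G)) (dif (f G)))].

Definition complex_iso (g n : nat) (A B : 'I_n -> rat) : Prop :=
  exists (f : rgraph -> fsum) (h : rgraph -> fsum),
  [/\ chain_map g A B f, chain_map g B A h,
      forall k G, gen g A k G -> inR g A (fsub (flift h (f G)) (fgen G)) &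
      forall k G, gen g B k G -> inR g B (fsub (flift f (h G)) (fgen G))].

(* Proof idea. (1) Stability of a graph only gets easier when the weights grow,
   and contracting a non-loop edge merges two stable vertices into a stable one,
   so the generators and the differential of G^(g,A) live in G^(g,B).  A
   relation of G^(g,B) is a relation of G^(g,A) as soon as one of its two graphs
   is A-stable, because isomorphic graphs are simultaneously A-stable.
   (2) As all weights lie in (0,1], besides whether a vertex carries legs at
   all, the weights enter its stability only through the sign of (sum of the
   weights of its legs) - 1, and only when it carries at least two legs: this
   sign is the side of a wall, which is constant along a chamber.  Hence A and B have the same stable graphs, so the
   same complex.  (3) Relabelling the legs by the permutation is an isomorphism
   of complexes, and (4) is (3) followed by (2). *)

From Pilot Require Import Defs.
From mathcomp Require Import all_boot all_order all_algebra all_fingroup.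
From mathcomp Require Import all_classical all_reals topology normedtype.
From mathcomp Require Import Rstruct Rstruct_topology.
From mathcomp Require Import lra zify.

Set Implicit Arguments.
Unset Strict Implicit.
Unset Printing Implicit Defensive.

Import Order.TTheory GRing.Theory Num.Theory.
Import numFieldNormedType.Exports.

Local Open Scope ring_scope.

(* Both names are also taken by fingraph and constructive_ereal. *)
Local Notation rgraph := Pilot.Defs.rgraph.
Local Notation contract := Pilot.Defs.contract.

Lemma coef_nil G : coef [::] G = 0.
Proof. by rewrite /coef big_nil. Qed.

Lemma coef_cons p x G :
  coef (p :: x) G = (if p.2 == G then p.1 else 0) + coef x G.
Proof. by rewrite /coef big_cons. Qed.

Lemma coef_cat x y G : coef (x ++ y) G = coef x G + coef y G.
Proof. by rewrite /coef big_cat. Qed.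

Lemma coef_fscale c x G : coef (fscale c x) G = c * coef x G.
Proof.
rewrite /coef big_map mulr_sumr; apply: eq_bigr => p _ /=.
by case: ifP; rewrite ?mulr0.
Qed.

Lemma coef_fgen H G : coef (fgen H) G = if H == G then 1 else 0.
Proof. by rewrite coef_cons coef_nil addr0. Qed.

Lemma coef_fsub x y G : coef (fsub x y) G = coef x G - coef y G.
Proof. by rewrite coef_cat coef_fscale mulN1r. Qed.

Lemma coef_flatten (T : Type) (F : T -> fsum) (rs : seq T) G :
  coef (flatten (map F rs)) G = \sum_(r <- rs) coef (F r) G.
Proof.
elim: rs => [|r rs IH]; first by rewrite big_nil coef_nil.
by rewrite /= coef_cat IH big_cons.
Qed.

Lemma coef_flift f x G :
  coef (flift f x) G = \sum_(p <- x) p.1 * coef (f p.2) G.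
Proof. by rewrite coef_flatten; apply: eq_bigr => p _; rewrite coef_fscale. Qed.

Lemma sum_coef_uniq (F : rgraph -> rat) x (s : seq rgraph) :
  uniq s -> {subset unzip2 x <= s} ->
  \sum_(p <- x) p.1 * F p.2 = \sum_(G <- s) coef x G * F G.
Proof.
move=> s_uniq xs; under [RHS]eq_bigr do rewrite /coef mulr_suml.
rewrite exchange_big /=; apply: eq_big_seq => p px.
rewrite (bigD1_seq p.2) ?xs ?(map_f snd px) //= eqxx big1 ?addr0 // => G.
by rewrite eq_sym => /negbTE ->; rewrite mul0r.
Qed.

Lemma sum_coef_eq (F : rgraph -> rat) x y : coef x =1 coef y ->
  \sum_(p <- x) p.1 * F p.2 = \sum_(p <- y) p.1 * F p.2.
Proof.
move=> xy; have s_uniq := undup_uniq (unzip2 x ++ unzip2 y).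
rewrite !(sum_coef_uniq F s_uniq); first by apply: eq_bigr => G _; rewrite xy.
all: by move=> G Gx; rewrite mem_undup mem_cat Gx ?orbT.
Qed.

Lemma sum_coef_supp_eq0 (F : rgraph -> rat) x :
  (forall G, coef x G != 0 -> F G = 0) -> \sum_(p <- x) p.1 * F p.2 = 0.
Proof.
move=> xF; rewrite (sum_coef_uniq F (undup_uniq (unzip2 x))); last first.
  by move=> G; rewrite mem_undup.
by apply: big1 => G _; have [->|/xF ->] := eqVneq (coef x G) 0;
  rewrite ?mul0r ?mulr0.
Qed.

Lemma coef_flift_eq f x y :
  coef x =1 coef y -> coef (flift f x) =1 coef (flift f y).
Proof.
by move=> xy G; rewrite !coef_flift; apply: (sum_coef_eq (coef^~ G \o f)).
Qed.

Definition fmap (phi : rgraph -> rgraph) (x : fsum) : fsum :=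
  [seq (p.1, phi p.2) | p <- x].

Lemma coef_flift_fgen phi x : coef (flift (fgen \o phi) x) =1 coef (fmap phi x).
Proof.
move=> G; rewrite coef_flift /coef big_map; apply: eq_bigr => p _.
by rewrite -/(coef _ _) coef_fgen /=; case: ifP; rewrite ?mulr1 ?mulr0.
Qed.

Lemma coef_dif_fgen G : coef (dif (fgen G)) =1 coef (dgen G).
Proof. by move=> H; rewrite /dif /flift /= cats0 coef_fscale mul1r. Qed.

Lemma inR_coef0 g n (A : 'I_n -> rat) x : coef x =1 (fun=> 0) -> inR g A x.
Proof. by move=> x0; exists [::]; split => // G; rewrite x0 coef_nil. Qed.

Section PermAction.
Variables (m : nat) (s : 'S_m).

Lemma pactE v (vm : (v < m)%N) : pact s v = s (Ordinal vm).
Proof. by rewrite /pact insubT. Qed.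

Lemma pact_ord (i : 'I_m) : pact s i = s i.
Proof. by rewrite (pactE (ltn_ord i)); congr (val (s _)); apply: val_inj. Qed.

Lemma pact_out v : (m <= v)%N -> pact s v = v.
Proof. by move=> mv; rewrite /pact insubN // -leqNgt. Qed.

Lemma pact_lt v : (pact s v < m)%N = (v < m)%N.
Proof.
by case: (ltnP v m) => vm; rewrite ?(pactE vm) ?ltn_ord // pact_out // ltnNge vm.
Qed.

End PermAction.

Lemma pactK m (s : 'S_m) : cancel (pact s) (pact s^-1).
Proof.
move=> v; case: (ltnP v m) => vm; last by rewrite !pact_out.
by rewrite (pactE s vm) pact_ord permK.
Qed.

Lemma pactKV m (s : 'S_m) : cancel (pact s^-1) (pact s).
Proof. by rewrite -{2}(invgK s); apply: pactK. Qed.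

Lemma pact_inj m (s : 'S_m) : injective (pact s).
Proof. exact: can_inj (pactK s). Qed.

Definition hedges (v : nat) (e : nat * nat) : nat := ((e.1 == v) + (e.2 == v))%N.

Lemma valE_sum_hedges G v : valE G v = (\sum_(e <- ends G) hedges v e)%N.
Proof.
rewrite /valE; elim: (ends G) => [|e s IH]; first by rewrite big_nil.
by rewrite big_cons /= addnACA IH.
Qed.

Definition stable_at n (A : 'I_n -> rat) (G : rgraph) (v : nat) : Prop :=
  0 < (2 * wv G v)%:R - 2 + (valE G v)%:R + valA A G v.

Lemma giso_vertex_map n G G' eps : giso n G G' eps ->
  exists2 f : nat -> nat,
    forall v, (v < nv G)%N -> (f v < nv G')%N /\
       forall A : 'I_n -> rat, (stable_at A G' (f v) <-> stable_at A G v)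
  & forall v', (v' < nv G')%N -> exists2 v, (v < nv G)%N & v' = f v.
Proof.
case=> eV [eE [sv [se [sv_wt sv_legs se_ends _]]]]; exists (pact sv); last first.
  by move=> v' v'G; exists (pact sv^-1 v'); rewrite ?pact_lt -?eV ?pactKV.
move=> v vG; split=> [|A]; first by rewrite eV pact_lt.
have valE_iso : valE G' (pact sv v) = valE G v.
  rewrite !valE_sum_hedges (big_nth (0, 0)%N) eE big_mkord.
  rewrite (big_nth (0, 0)%N) big_mkord (reindex_inj (@perm_inj _ se)).
  apply: eq_bigr => j _; rewrite -/(edge G' _) -/(edge G _).
  move: (se_ends j (ltn_ord j)); rewrite /= pact_ord => /orP[]/eqP->;
    by rewrite /hedges /= !(inj_eq (@pact_inj _ sv)) // addnC.
have valA_iso : valA A G' (pact sv v) = valA A G v.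
  by apply: eq_bigl => i; rewrite sv_legs // (inj_eq (@pact_inj _ sv)).
by rewrite /stable_at sv_wt // valE_iso valA_iso.
Qed.

Lemma giso_stable_at n (A : 'I_n -> rat) G G' eps : giso n G G' eps ->
  (forall v, (v < nv G)%N -> stable_at A G v) <->
  (forall v, (v < nv G')%N -> stable_at A G' v).
Proof.
case/giso_vertex_map=> f fG f_onto; split=> [Gst v' /f_onto[v vG ->]|G'st v vG].
  by have [_ ->] := fG v vG; apply: Gst.
by have [fv <-] := fG v vG; apply: G'st.
Qed.

Lemma stable_giso g n (A B : 'I_n -> rat) G G' eps : giso n G G' eps ->
  stable g B G -> stable g B G' -> (stable g A G <-> stable g A G').
Proof.
move=> iso [Gwf Gg _] [G'wf G'g _].
by split=> -[_ _ st]; split=> //; apply/(giso_stable_at A iso).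
Qed.

Lemma connect_from_isolated (T : finType) (e : rel T) x y :
  (forall z, ~~ e x z) -> connect e x y -> y = x.
Proof.
move=> x_isol /connectP[[|z p] /=]; first by move=> _ ->.
by rewrite (negbTE (x_isol z)).
Qed.

Lemma adj_valE0 G (u : 'I_(nv G)) : valE G u = 0%N -> forall w, ~~ @adj G u w.
Proof.
move/eqP; rewrite addn_eq0 !eqn0Ngt -!has_count => /andP[/hasPn E1 /hasPn E2] w.
by apply/hasPn => e eG; rewrite (negbTE (E1 e eG)) (negbTE (E2 e eG)) andbF.
Qed.

(* A vertex of weight 0 without edges would be a whole graph of genus 0. *)
Lemma weight_or_edge_at g n G v : (1 <= g)%N -> wf_graph n G ->
  (betti1 G + sumn (wt G))%N = g -> (v < nv G)%N -> (0 < wv G v + valE G v)%N.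
Proof.
move=> g1 [nv0 wt_size ends_lt _ conn] Gg vG; rewrite lt0n addn_eq0.
apply/negP => /andP[/eqP wv0 /eqP E0].
have all_v (u : 'I_(nv G)) : val u = v.
  have v_isol := @adj_valE0 G (Ordinal vG) E0.
  by rewrite (connect_from_isolated v_isol (conn (Ordinal vG) u)).
have nv1 : nv G = 1%N.
  have last_lt : ((nv G).-1 < nv G)%N by rewrite ltn_predL.
  by have := all_v (Ordinal nv0); have := all_v (Ordinal last_lt); rewrite /=; lia.
have v0 : v = 0%N by lia.
have ends0 : ends G = [::].
  move: E0 ends_lt; rewrite /valE nv1 v0.
  by case: (ends G) => [|[[|a] b] es] //=; rewrite ?andbF.
move: Gg wt_size wv0; rewrite /betti1 /wv ends0 nv1 v0.
by case: (wt G) => [|w [|]] //=; lia.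
Qed.

Section UnitWeights.
Variables (n : nat) (A : 'I_n -> rat).
Hypothesis A01 : forall i, 0 < A i <= 1.

Lemma sum_weights_ge0 (S : {set 'I_n}) : 0 <= \sum_(i in S) A i.
Proof. by apply: sumr_ge0 => i _; case/andP: (A01 i) => /ltW. Qed.

Lemma sum_weights_le_card (S : {set 'I_n}) : \sum_(i in S) A i <= #|S|%:R.
Proof. by rewrite -sumr_const; apply: ler_sum => i _; case/andP: (A01 i). Qed.

Lemma sum_weights_gt0 (S : {set 'I_n}) : (0 < \sum_(i in S) A i) = (0 < #|S|)%N.
Proof.
have [/eqP|/card_gt0P[i iS]] := posnP #|S|.
  by rewrite cards_eq0 => /eqP->; rewrite big_set0.
rewrite (big_setD1 i iS) /=; have /andP[Ai_gt0 _] := A01 i.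
exact: ltr_pwDl Ai_gt0 (sum_weights_ge0 _).
Qed.

End UnitWeights.

Lemma valA_legs_at n (A : 'I_n -> rat) G v :
  valA A G v = \sum_(i in [set i : 'I_n | leg G i == v]) A i.
Proof. by apply: eq_bigl => i; rewrite inE. Qed.

(* With weights in (0,1], the condition at v is automatic when 2 w(v) + |v|_E
   is at least 3, means "some leg at v" when it is 2, and "the legs at v weigh
   more than 1" when it is 1, which forces at least two legs at v. *)
Lemma stable_at_transfer n (A B : 'I_n -> rat) G v :
  (forall i, 0 < A i <= 1) -> (forall i, 0 < B i <= 1) ->
  (forall S : {set 'I_n}, (2 <= #|S|)%N ->
     1 < \sum_(i in S) A i -> 1 < \sum_(i in S) B i) ->
  (0 < wv G v + valE G v)%N -> stable_at A G v -> stable_at B G v.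
Proof.
move=> A01 B01 walls Gv; rewrite /stable_at !valA_legs_at.
set S := [set i : 'I_n | leg G i == v]; rewrite -[_ - 2 + _]addrAC -natrD.
case Ek: (2 * wv G v + valE G v)%N => [|[|[|k]]]; first by lia.
- move=> A_gt1; have {}A_gt1 : 1 < \sum_(i in S) A i by lra.
  suff: (2 <= #|S|)%N by move/walls/(_ A_gt1); lra.
  rewrite ltnNge; apply: contraTN A_gt1 => S_le1; rewrite -leNgt.
  by apply: le_trans (sum_weights_le_card A01 S) _; rewrite lern1.
- move=> A_gt0; suff: 0 < \sum_(i in S) B i by lra.
  by rewrite sum_weights_gt0 // -(sum_weights_gt0 A01); lra.
- move=> _; have := sum_weights_ge0 B01 S.
  have : 2%:R < k.+3%:R :> rat by rewrite ltr_nat.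
  lra.
Qed.

Lemma stable_transfer g n (A B : 'I_n -> rat) G : (1 <= g)%N ->
  (forall i, 0 < A i <= 1) -> (forall i, 0 < B i <= 1) ->
  (forall S : {set 'I_n}, (2 <= #|S|)%N ->
     1 < \sum_(i in S) A i -> 1 < \sum_(i in S) B i) ->
  stable g A G -> stable g B G.
Proof.
move=> g1 A01 B01 walls [Gwf Gg Gst]; split=> // v vG.
exact: stable_at_transfer (weight_or_edge_at g1 Gwf Gg vG) (Gst v vG).
Qed.

Definition contract_vertex (a b v : nat) : nat := unbump b (if v == b then a else v).

Lemma contract_edgeE G j a b : edge G j = (a, b) ->
  contract G j = ((nv G).-1,
    [seq (wv G (bump b u) + (if bump b u == a then wv G b else 0%N))%N
       | u <- iota 0 (nv G).-1],
    [seq (contract_vertex a b e.1, contract_vertex a b e.2)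
       | e <- take j (ends G) ++ drop j.+1 (ends G)],
    [seq contract_vertex a b v | v <- legs G]).
Proof. by rewrite /contract => ->. Qed.

Lemma unbump_lt N b y : (b < N)%N -> (y < N)%N -> y != b -> (unbump b y < N.-1)%N.
Proof. by move=> bN yN /eqP yb; rewrite /unbump; case: (ltnP b y) => /=; lia. Qed.

Section ContractVertex.
Variables (a b : nat).
Hypothesis ab : a != b.

Lemma contract_vertex_eq x u : (contract_vertex a b x == u) =
  (x == bump b u) || (x == b) && (a == bump b u).
Proof.
have unbump_eq y : y != b -> (unbump b y == u) = (y == bump b u).
  by move=> yb; apply/eqP/eqP => [<-|->]; [rewrite unbumpK ?inE | exact: bumpK].
rewrite /contract_vertex; case: (eqVneq x b) => [->|xb] /=.
  by rewrite unbump_eq // (negbTE (neq_bump b u)).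
by rewrite unbump_eq ?orbF.
Qed.

Lemma contract_vertex_nat x u : nat_of_bool (contract_vertex a b x == u) =
  ((x == bump b u) + (x == b) * (a == bump b u))%N.
Proof.
rewrite contract_vertex_eq; case: (eqVneq x b) => [->|_]; last first.
  by case: (x == bump b u); case: (a == bump b u).
by rewrite (negbTE (neq_bump b u)); case: (a == bump b u).
Qed.

Lemma contract_vertex_lt N x : (a < N)%N -> (b < N)%N -> (x < N)%N ->
  (contract_vertex a b x < N.-1)%N.
Proof.
move=> aN bN xN; rewrite /contract_vertex.
by case: ifP => [_|/negbT]; apply: unbump_lt.
Qed.

Lemma contract_vertex_bump u : contract_vertex a b (bump b u) = u.
Proof. by rewrite /contract_vertex eq_sym (negbTE (neq_bump b u)) bumpK. Qed.

End ContractVertex.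

Lemma connect_map (T T' : finType) (e : rel T) (e' : rel T') (f : T -> T') :
  (forall x y, e x y -> connect e' (f x) (f y)) ->
  forall x y, connect e x y -> connect e' (f x) (f y).
Proof.
move=> fe x y /connectP[p]; elim: p x => [|z p IH] x /=; first by move=> _ ->.
by case/andP=> /fe xz zp yp; apply: connect_trans xz (IH z zp yp).
Qed.

Section Contraction.
Variables (n : nat) (G : rgraph) (j a b : nat).
Hypotheses (Gwf : wf_graph n G) (jG : (j < size (ends G))%N).
Hypotheses (Gj : edge G j = (a, b)) (ab : a != b).

Let rest := take j (ends G) ++ drop j.+1 (ends G).
Let H := contract G j.
Let cv := contract_vertex a b.

Lemma ends_split : ends G = take j (ends G) ++ (a, b) :: drop j.+1 (ends G).
Proof. by rewrite -Gj /edge -drop_nth // cat_take_drop. Qed.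

Lemma contracted_edge_lt : (a < nv G)%N /\ (b < nv G)%N.
Proof.
case: Gwf => _ _ /allP ends_lt _ _.
have abG : (a, b) \in ends G by rewrite -Gj /edge mem_nth.
by have /andP := ends_lt _ abG.
Qed.

Lemma nv_contract : nv H = (nv G).-1.
Proof. by rewrite /H (contract_edgeE Gj). Qed.

Lemma ends_contract : ends H = [seq (cv e.1, cv e.2) | e <- rest].
Proof. by rewrite /H (contract_edgeE Gj). Qed.

Lemma legs_contract : legs H = [seq cv v | v <- legs G].
Proof. by rewrite /H (contract_edgeE Gj). Qed.

Lemma wt_contract : wt H =
  [seq (wv G (bump b u) + (if bump b u == a then wv G b else 0%N))%N
     | u <- iota 0 (nv G).-1].
Proof. by rewrite /H (contract_edgeE Gj). Qed.

Lemma size_ends_contract : size (ends H) = (size (ends G)).-1.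
Proof. by rewrite ends_contract size_map size_cat size_take size_drop jG; lia. Qed.

Lemma wv_contract u : (u < (nv G).-1)%N ->
  wv H u = (wv G (bump b u) + (if bump b u == a then wv G b else 0%N))%N.
Proof.
by move=> uH; rewrite /wv wt_contract (nth_map 0%N) ?size_iota // nth_iota.
Qed.

Lemma sumn_wt_contract : sumn (wt H) = sumn (wt G).
Proof.
case: Gwf => _ wt_size _ _ _; have [aG bG] := contracted_edge_lt.
rewrite wt_contract !sumnE big_map.
rewrite -{1}(subn0 (nv G).-1) -/(index_iota _ _) big_mkord.
rewrite (big_nth 0%N) wt_size big_mkord (bigD1_ord (Ordinal bG)) //= big_split /=.
rewrite addnC; congr (_ + _)%N.
have a'_lt : (unbump b a < (nv G).-1)%N by apply: unbump_lt.
rewrite (bigD1 (Ordinal a'_lt)) //= unbumpK ?inE // eqxx big1 ?addn0 // => u u_ne.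
by case: eqP => // a_eq; case/eqP: u_ne; apply: val_inj; rewrite /= -a_eq bumpK.
Qed.

(* At the merged vertex (bump b u = a) this says |u|_E = |a|_E + |b|_E - 2,
   stated additively to avoid truncated subtraction. *)
Lemma valE_contract u : (valE H u + 2 * (bump b u == a) =
  valE G (bump b u) + (bump b u == a) * valE G b)%N.
Proof.
have valE_rest v : valE G v = (\sum_(e <- rest) hedges v e + hedges v (a, b))%N.
  by rewrite valE_sum_hedges {1}ends_split !big_cat big_cons /=; lia.
rewrite !valE_rest valE_sum_hedges ends_contract big_map.
set c := bump b u.
have -> : (\sum_(e <- rest) hedges u (cv e.1, cv e.2) =
           \sum_(e <- rest) hedges c e + (\sum_(e <- rest) hedges b e) * (a == c))%N.
  rewrite big_distrl -big_split /=; apply: eq_bigr => e _.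
  by rewrite /hedges /= !contract_vertex_nat // mulnDl addnACA.
have bc : (b == c) = false by rewrite /c (negbTE (neq_bump b u)).
by rewrite /hedges /= bc eqxx (negbTE ab) eq_sym; case: (c == a) => /=; lia.
Qed.

Lemma valA_contract (A : 'I_n -> rat) u : valA A H u =
  valA A G (bump b u) + (if bump b u == a then valA A G b else 0).
Proof.
case: Gwf => _ _ _ [legs_size _] _.
have -> : valA A H u = \sum_(i < n | (leg G i == bump b u) ||
                                     (leg G i == b) && (a == bump b u)) A i.
  apply: eq_bigl => i.
  by rewrite /leg legs_contract (nth_map 0%N) ?legs_size // contract_vertex_eq.
rewrite [bump b u == a]eq_sym; case: (eqVneq a (bump b u)) => [_|_] /=; last first.
  by rewrite addr0 /valA; apply: eq_bigl => i; rewrite andbF orbF.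
rewrite /valA (bigID (fun i : 'I_n => leg G i == bump b u)) /=; congr (_ + _).
  by apply: eq_bigl => i; rewrite andbT orbK.
apply: eq_bigl => i; rewrite andbT.
case: (eqVneq (leg G i) b) => [->|Gib]; last by rewrite ?(negbTE Gib) orbF andbN.
by rewrite ?eqxx orbT neq_bump.
Qed.

Lemma connected_contract : forall u v : 'I_(nv H), connect (@adj H) u v.
Proof.
case: Gwf => _ _ _ _ conn; have [aG bG] := contracted_edge_lt.
rewrite /H (contract_edgeE Gj) /=.
pose phi (x : 'I_(nv G)) : 'I_(nv G).-1 :=
  Ordinal (contract_vertex_lt ab aG bG (ltn_ord x)).
have phiK (u : 'I_(nv G).-1) : phi (lift (Ordinal bG) u) = u.
  by apply: val_inj; rewrite /= contract_vertex_bump.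
move=> u v; rewrite -(phiK u) -(phiK v); apply: connect_map (conn _ _) => x y.
rewrite /adj {1}ends_split has_cat /= orbCA -has_cat => /orP[xy|/hasP[e e_rest xy]].
  have merged : contract_vertex a b a = contract_vertex a b b.
    by rewrite /contract_vertex (negbTE ab) eqxx.
  apply: eq_connect0; apply: val_inj => /=.
  by case/orP: xy => /andP[/eqP<- /eqP<-]; rewrite merged.
apply/connect1/hasP; exists (cv e.1, cv e.2); first exact: map_f.
by case/orP: xy => /andP[/eqP-> /eqP->]; rewrite /= !eqxx ?orbT.
Qed.

Lemma wf_graph_contract : wf_graph n H.
Proof.
case: Gwf => nv_gt0 wt_size /allP ends_lt [legs_size /allP legs_lt] _.
have [aG bG] := contracted_edge_lt.
have cv_lt x : (x < nv G)%N -> (cv x < nv H)%N.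
  by rewrite nv_contract; apply: contract_vertex_lt.
split.
- by rewrite nv_contract; move: ab => /eqP; lia.
- by rewrite wt_contract nv_contract size_map size_iota.
- rewrite ends_contract; apply/allP => _ /mapP[e e_rest ->] /=.
  have /ends_lt/andP[e1G e2G] : e \in ends G.
    by move: e_rest; rewrite mem_cat => /orP[/mem_take|/mem_drop].
  by rewrite !cv_lt.
- rewrite legs_contract size_map legs_size; split=> //.
  by apply/allP => _ /mapP[v /legs_lt vG ->]; rewrite cv_lt.
- exact: connected_contract.
Qed.

Lemma genus_contract :
  (betti1 H + sumn (wt H))%N = (betti1 G + sumn (wt G))%N.
Proof.
have [aG _] := contracted_edge_lt.
rewrite /betti1 size_ends_contract nv_contract sumn_wt_contract; move: jG; lia.
Qed.

(* The quantity 2 w - 2 + |.|_E + |.|_A of the merged vertex is the sum of those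
   of a and b: the two half-edges lost pay for the extra -2. *)
Lemma stable_at_contract (A : 'I_n -> rat) u : (u < (nv G).-1)%N ->
  (forall v, (v < nv G)%N -> stable_at A G v) -> stable_at A H u.
Proof.
move=> uH Gst; have [aG bG] := contracted_edge_lt.
have uG : (bump b u < nv G)%N by rewrite /bump; case: leqP => /=; lia.
have := valE_contract u; rewrite /stable_at valA_contract wv_contract //.
case: (eqVneq (bump b u) a) => [ua|_] /=.
  2: by rewrite !addn0 addr0 => ->; apply: Gst.
rewrite ua mul1n muln1 => /(congr1 (fun k : nat => k%:R : rat)); rewrite !natrD.
by have := Gst a aG; have := Gst b bG; rewrite /stable_at !natrM !natrD; lra.
Qed.

End Contraction.

Lemma stable_contract g n (A : 'I_n -> rat) G j : stable g A G ->
  (j < size (ends G))%N -> (edge G j).1 != (edge G j).2 ->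
  stable g A (contract G j).
Proof.
case Gj: (edge G j) => [a b] /= [Gwf Gg Gst] jG ab; split.
- exact: wf_graph_contract Gwf jG Gj ab.
- by rewrite (genus_contract Gwf jG Gj ab).
- move=> u; rewrite (nv_contract Gj) => uH.
  exact: (stable_at_contract Gwf jG Gj ab).
Qed.

Lemma coef_dgen_neq0 G H : coef (dgen G) H != 0 ->
  exists2 j, (j < size (ends G))%N /\ (edge G j).1 != (edge G j).2
           & H = contract G j.
Proof.
pose hit j := ((edge G j).1 != (edge G j).2) && (contract G j == H).
have [/hasP[j jG /andP[nonloop /eqP<-]] _|/hasPn miss] :=
  boolP (has hit (iota 0 (size (ends G)))).
  by exists j => //; split=> //; move: jG; rewrite mem_iota.
rewrite /coef big_map big_filter big1_seq ?eqxx // => j /andP[nonloop jG] /=.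
by have := miss j jG; rewrite /hit nonloop /= => /negbTE->.
Qed.

Lemma inC_dif g n (A : 'I_n -> rat) k x : inC g A k x -> inC g A k.-1 (dif x).
Proof.
move=> xA H; rewrite coef_flift => dxH.
have [[G [xG dGH]]|no_G] :=
  pselect (exists G, coef x G != 0 /\ coef (dgen G) H != 0); last first.
  move: dxH; rewrite (sum_coef_supp_eq0 (F := coef^~ H \o dgen)) ?eqxx // => G xG /=.
  by apply/eqP; apply: contraT => dGH; case: no_G; exists G.
have [Gst Gk] := xA G xG; have [j [jG nonloop] ->] := coef_dgen_neq0 dGH.
split; first exact: stable_contract.
move: nonloop; case Gj: (edge G j) => [a b] ab.
by rewrite (size_ends_contract jG Gj ab) Gk.
Qed.

Lemma stable_wle g n (A B : 'I_n -> rat) G : wle A B -> stable g A G -> stable g B G.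
Proof.
move=> AB [Gwf Gg Gst]; split=> // v vG; apply: lt_le_trans (Gst v vG) _.
by rewrite lerD2l; apply: ler_sum => i _; apply: AB.
Qed.

Lemma coef_relv_other c G1 G2 eps G : G1 != G -> G2 != G ->
  coef (fscale c (relv G1 G2 eps)) G = 0.
Proof.
move=> /negbTE G1G /negbTE G2G.
by rewrite coef_fscale !coef_cons coef_nil /= G1G G2G !add0r mulr0.
Qed.

(* Keep the relations whose first graph is A-stable: by [stable_giso] both
   their graphs are then A-stable, while the discarded relations involve no
   A-stable graph, hence none in the support of x. *)
Lemma inR_wle g n (A B : 'I_n -> rat) k x :
  wle A B -> inC g A k x -> inR g B x -> inR g A x.
Proof.
move=> AB xA [rs [rsB xrs]].
pose relA (r : rat * rgraph * rgraph * rat) := `[< stable g A r.1.1.2 >].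
have rsA r : r \in rs -> relA r = `[< stable g A r.1.2 >].
  by case/rsB=> G1B G2B iso; apply: asbool_equiv_eq; apply: stable_giso iso G1B G2B.
exists [seq r <- rs | relA r]; split.
  move=> r; rewrite mem_filter => /andP[r_A r_rs]; have [_ _ iso] := rsB r r_rs.
  by split=> //; apply/asboolP; rewrite -?rsA.
move=> G; rewrite coef_flatten big_filter.
have [GA|GnA] := pselect (stable g A G).
  rewrite xrs coef_flatten (bigID relA) /= [X in _ + X]big1_seq ?addr0 //.
  move=> r /andP[r_nA r_rs]; have r2_nA := r_nA; rewrite rsA // in r2_nA.
  move/asboolPn: r_nA => r1_nA; move/asboolPn: r2_nA => r2_nA.
  by apply: coef_relv_other; apply/eqP => rG; [apply: r1_nA | apply: r2_nA];
    rewrite rG.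
have -> : coef x G = 0 by apply/eqP; apply: contraT => /xA[].
rewrite big1_seq // => r /andP[r_A r_rs]; have r2_A := r_A; rewrite rsA // in r2_A.
move/asboolP: r_A => r1_A; move/asboolP: r2_A => r2_A.
by apply: coef_relv_other; apply/eqP => rG; apply: GnA; rewrite -rG.
Qed.

Lemma subcomplex_wle g n (A B : 'I_n -> rat) : wle A B -> subcomplex g A B.
Proof.
move=> AB; split=> [k x xA G /xA[Gst Gk] | k x xA | k x]; last exact: inC_dif.
  by split=> //; apply: stable_wle Gst.
split; last exact: inR_wle AB xA.
case=> rs [rsA xrs]; exists rs; split=> // r /rsA[G1A G2A iso].
by split=> //; apply: stable_wle AB _.
Qed.

Section SameStable.
Variables (g n : nat) (B B' : 'I_n -> rat).
Hypothesis BB' : forall G, stable g B G <-> stable g B' G.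

Lemma gen_same_stable k G : gen g B k G <-> gen g B' k G.
Proof. by rewrite /gen BB'. Qed.

Lemma inC_same_stable k x : inC g B k x <-> inC g B' k x.
Proof. by split=> xB G /xB; rewrite gen_same_stable. Qed.

Lemma inR_same_stable x : inR g B x <-> inR g B' x.
Proof.
have isorelE G G' eps : isorel g B G G' eps <-> isorel g B' G G' eps.
  by split=> -[GB G'B iso]; split=> //; apply/BB'.
by split=> -[rs [rsB xrs]]; exists rs; split=> // r /rsB/isorelE.
Qed.

Lemma same_complex_same_stable : same_complex g B B'.
Proof. by split=> [k x|x]; [apply: inC_same_stable | apply: inR_same_stable]. Qed.

Lemma complex_iso_same_stable (A : 'I_n -> rat) :
  complex_iso g A B -> complex_iso g A B'.
Proof.
case=> f [h [[fC fR fd] [hC hR hd] hf fh]]; exists f, h; split.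
- split=> [k G /fC/inC_same_stable | k x xA /(fR _ _ xA)/inR_same_stable |
           k G /fd/inR_same_stable] //.
- split=> [k G /gen_same_stable/hC | k x /inC_same_stable xB |
           k G /gen_same_stable/hd] //.
  by move/inR_same_stable/(hR _ _ xB).
- exact: hf.
- by move=> k G /gen_same_stable/fh/inR_same_stable.
Qed.

End SameStable.

Definition relabel (n : nat) (s : 'S_n) (G : rgraph) : rgraph :=
  (nv G, wt G, ends G, mkseq (fun i => leg G (pact s i)) n).

Section Relabel.
Variables (n : nat) (s : 'S_n).

Lemma leg_relabel G (i : 'I_n) : leg (relabel s G) i = leg G (s i).
Proof. by rewrite /leg nth_mkseq // pact_ord. Qed.

Lemma stable_relabel g (A B : 'I_n -> rat) G : (forall i, B i = A (s i)) ->
  stable g A G -> stable g B (relabel s G).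
Proof.
move=> BA [[nv_gt0 wt_size ends_lt [legs_size /allP legs_lt] conn] Gg Gst].
split=> //.
  split=> //; split; first by rewrite size_mkseq.
  apply/allP => x /mapP[i]; rewrite mem_iota => /andP[_ i_lt] ->.
  by apply/legs_lt/mem_nth; rewrite legs_size pact_lt.
move=> v vG; have valA_relabel : valA B (relabel s G) v = valA A G v.
  rewrite /valA [RHS](reindex_inj (@perm_inj _ s)) /=.
  by apply: eq_big => [i|i _]; rewrite ?leg_relabel ?BA.
by rewrite /stable_at valA_relabel; apply: Gst.
Qed.

Lemma giso_relabel G G' eps : giso n G G' eps ->
  giso n (relabel s G) (relabel s G') eps.
Proof.
case=> eV [eE [sv [se [sv_wt sv_legs se_ends sgn]]]].
exists eV, eE, sv, se; split=> // i i_lt.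
by rewrite /leg !nth_mkseq // sv_legs // pact_lt.
Qed.

Lemma contract_relabel G j : size (legs G) = n ->
  contract (relabel s G) j = relabel s (contract G j).
Proof.
move=> legs_size; case Gj: (edge G j) => [a b].
have Gsj : edge (relabel s G) j = (a, b) by [].
rewrite (contract_edgeE Gj) (contract_edgeE Gsj) /relabel /=.
congr (_, _); rewrite /mkseq -map_comp; apply/eq_in_map => i.
rewrite mem_iota => /andP[_ i_lt].
by rewrite /leg /= (nth_map 0%N) // legs_size pact_lt.
Qed.

Lemma dgen_relabel G : size (legs G) = n ->
  dgen (relabel s G) = fmap (relabel s) (dgen G).
Proof.
move=> legs_size; rewrite /dgen /fmap -map_comp.
by apply/eq_in_map => j _ /=; rewrite contract_relabel.
Qed.

Lemma relabelK G : size (legs G) = n -> relabel s^-1 (relabel s G) = G.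
Proof.
case: G => [[[V W] E] L] /= L_size; rewrite /relabel /=; congr (_, _).
rewrite -[RHS](mkseq_nth 0%N) L_size; apply/eq_in_map => i.
by rewrite mem_iota => /andP[_ i_lt]; rewrite /leg /= nth_mkseq ?pactKV ?pact_lt.
Qed.

End Relabel.

Lemma relabelKV n (s : 'S_n) G :
  size (legs G) = n -> relabel s (relabel s^-1 G) = G.
Proof. by move=> legs_size; rewrite -{1}(invgK s) relabelK. Qed.

Lemma chain_map_relabel g n (A B : 'I_n -> rat) (s : 'S_n) :
  (forall G, stable g A G -> stable g B (relabel s G)) ->
  chain_map g A B (fgen \o relabel s).
Proof.
move=> AB; split.
- move=> k G [GA Gk] H; rewrite coef_fgen.
  case: (eqVneq (relabel s G) H) => [<- _|_]; last by rewrite eqxx.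
  by split; first apply: AB.
- move=> k x _ [rs [rsA xrs]].
  exists [seq (r.1.1.1, relabel s r.1.1.2, relabel s r.1.2, r.2) | r <- rs]; split.
    move=> r2 /mapP[r /rsA[G1A G2A iso] ->].
    by split; [apply: AB | apply: AB | apply: giso_relabel].
  move=> G; rewrite (coef_flift_eq _ xrs) coef_flift_fgen; congr coef.
  by rewrite /fmap map_flatten -!map_comp.
- move=> k G [[[_ _ _ [legs_size _] _] _ _] _]; apply: inR_coef0 => H.
  by rewrite coef_fsub coef_flift_fgen coef_dif_fgen dgen_relabel // subrr.
Qed.

Lemma complex_iso_perm g n (A B : 'I_n -> rat) (s : 'S_n) :
  (forall i, B i = A (s i)) -> complex_iso g A B.
Proof.
move=> BA; exists (fgen \o relabel s), (fgen \o relabel s^-1); split.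
- by apply: chain_map_relabel => G; apply: stable_relabel.
- by apply: chain_map_relabel => G; apply: stable_relabel => i; rewrite BA permKV.
- move=> k G [[[_ _ _ [legs_size _] _] _ _] _]; apply: inR_coef0 => H.
  by rewrite coef_fsub coef_flift_fgen /= relabelK // subrr.
- move=> k G [[[_ _ _ [legs_size _] _] _ _] _]; apply: inR_coef0 => H.
  by rewrite coef_fsub coef_flift_fgen /= relabelKV // subrr.
Qed.

Local Open Scope classical_set_scope.

Lemma connected_avoid_gt (T : topologicalType) (R : realFieldType) (f : T -> R)
    (C : set T) (c : R) (x y : T) :
  continuous f -> connected C -> (forall z, C z -> f z != c) ->
  C x -> C y -> c < f x -> c < f y.
Proof.
move=> f_cont C_conn C_neq Cx Cy cfx.
have CE : C `&` f @^-1` [set r | c < r] = C.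
  apply: C_conn; first by exists x.
    exists (f @^-1` [set r | c < r]) => //.
    by apply: open_comp; [move=> z _; apply: f_cont | apply: open_gt].
  exists (f @^-1` [set r | c <= r]).
    by apply: preimage_closed; [move=> z _; apply: f_cont | apply: closed_ge].
  apply/seteqP; split=> z [Cz /= fz]; split=> //; first exact: ltW.
  by rewrite lt_neqAle fz andbT eq_sym C_neq.
by move: Cy; rewrite -CE => -[].
Qed.

Lemma continuous_sum_coords n (S : {set 'I_n}) :
  continuous (fun x : 'rV[realR]_n => \sum_(i in S) x ord0 i).
Proof.
apply: (@continuous_big realR 'I_n +%R 0); first exact: (@add_continuous realR^o).
by move=> i _; apply: coord_continuous.
Qed.

Lemma chamber_wall_side g n (C : set 'rV[realR]_n) x y (S : {set 'I_n}) :
  connected C -> C `<=` @chamber_region g n -> C x -> C y -> (2 <= #|S|)%N ->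
  1 < \sum_(i in S) x ord0 i -> 1 < \sum_(i in S) y ord0 i.
Proof.
move=> C_conn C_sub Cx Cy S2.
apply: (connected_avoid_gt (@continuous_sum_coords n S) C_conn _ Cx Cy).
by move=> z /C_sub[_ no_wall]; apply/eqP => zS; apply: no_wall; exists S.
Qed.

Lemma sum_wpt n (A : 'I_n -> rat) (S : {set 'I_n}) :
  \sum_(i in S) wpt A ord0 i = ratr (\sum_(i in S) A i).
Proof. by rewrite rmorph_sum; apply: eq_bigr => i _; rewrite mxE. Qed.

Lemma same_stable_in_chamber g n (A B : 'I_n -> rat) : (1 <= g)%N ->
  (forall i, 0 < A i <= 1) -> (forall i, 0 < B i <= 1) ->
  @chamber_region g n (wpt A) -> chamber_of g A (wpt B) ->
  forall G, stable g A G <-> stable g B G.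
Proof.
move=> g1 A01 B01 rA CB G.
have C_conn := @component_connected _ (@chamber_region g n) (wpt A).
have C_sub := @connected_component_sub _ (@chamber_region g n) (wpt A).
have CA : chamber_of g A (wpt A) by apply: connected_component_refl.
have walls (A1 A2 : 'I_n -> rat) :
    chamber_of g A (wpt A1) -> chamber_of g A (wpt A2) ->
    forall S : {set 'I_n}, (2 <= #|S|)%N ->
    1 < \sum_(i in S) A1 i -> 1 < \sum_(i in S) A2 i.
  move=> C1 C2 S S2; rewrite -!(ltr_rat realR) rmorph1 -!sum_wpt.
  exact: chamber_wall_side C_conn C_sub C1 C2 S2.
by split; apply: stable_transfer => //; apply: walls.
Qed.

Lemma wpt_perm n (A : 'I_n -> rat) (s : 'S_n) :
  perm_pt s (wpt A) = wpt (fun i => A (s i)).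
Proof. by apply/matrixP => i j; rewrite !mxE. Qed.

Theorem mainTheorem7 (g n : nat) (A B : 'I_n -> rat) :
  (1 <= g)%N -> (1 <= n)%N -> weight_datum g A -> weight_datum g B ->
  [/\ wle A B -> subcomplex g A B,
      @chamber_region g n (wpt A) -> @chamber_region g n (wpt B) ->
        chamber_of g A = chamber_of g B -> same_complex g A B,
      (exists s : 'S_n, forall i, B i = A (s i)) -> complex_iso g A B &
      @chamber_region g n (wpt A) -> @chamber_region g n (wpt B) ->
        (exists s : 'S_n, perm_set s (chamber_of g A) = chamber_of g B) ->
        complex_iso g A B].
Proof.
move=> g1 _ [A01 _] [B01 _]; split.
- exact: subcomplex_wle.
- move=> rA rB chAB; apply/same_complex_same_stable/same_stable_in_chamber => //.
  by rewrite chAB; apply: connected_component_refl.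
- by case=> s BA; apply: complex_iso_perm BA.
- move=> rA rB [s chAB]; pose As := fun i => A (s i).
  have As01 i : 0 < As i <= 1 by apply: A01.
  have ch_As : chamber_of g B (wpt As).
    rewrite -wpt_perm -chAB; exists (wpt A) => //.
    exact: connected_component_refl.
  have iso_As : complex_iso g A As by apply: (@complex_iso_perm g n A As s).
  have As_B G : stable g As G <-> stable g B G.
    by rewrite (same_stable_in_chamber g1 B01 As01 rB ch_As).
  exact: (complex_iso_same_stable As_B iso_As).
Qed.
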